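(* Let $S_8=\mathrm{diag}(1,-1,1,-1,1,-1,1,-1)$. For every $a\in C\ell_{1,2}$, $$L(a')=L(a)^T,\quad R(a')=R(a)^T,\quad L(\bar a)=S_8L(a)^TS_8,\quad R(\bar a)=S_8R(a)^TS_8.$$
   Context: $C\ell_{1,2}$ is the real Clifford algebra generated by $i_1,i_2,i_3$ with $i_1^2=1$, $i_2^2=i_3^2=-1$ and $i_ti_m=-i_mi_t$ for $t\neq m$, with real basis $e_0=1$, $e_1=i_1$, $e_2=i_2$, $e_3=i_1i_2$, $e_4=i_3$, $e_5=i_1i_3$, $e_6=i_2i_3$, $e_7=i_1i_2i_3$. For $x=\sum_{t=0}^7x_te_t$ write $\overrightarrow{x}=(x_0,\dots,x_7)^T\in\mathbb{R}^8$. For $a\in C\ell_{1,2}$, $L(a)$ and $R(a)$ are the real $8\times8$ matrices with $\overrightarrow{ax}=L(a)\overrightarrow{x}$ and $\overrightarrow{xa}=R(a)\overrightarrow{x}$ for all $x\in C\ell_{1,2}$. For $a=\sum a_te_t$: $\bar a=a_0-a_1e_1-a_2e_2-a_3e_3-a_4e_4-a_5e_5-a_6e_6+a_7e_7$ and $a'=a_0+a_1e_1-a_2e_2+a_3e_3-a_4e_4+a_5e_5-a_6e_6-a_7e_7$. *)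

From mathcomp Require Import all_boot all_order all_algebra.
From mathcomp Require Import reals.
Set Implicit Arguments. Unset Strict Implicit. Unset Printing Implicit Defensive.
Import Order.TTheory GRing.Theory Num.Theory.
Local Open Scope ring_scope.

(* Basis e_t of Cl_{1,2}, t = 0..7, is indexed by the bitmask of generators:
   bit 0 <-> i1, bit 1 <-> i2, bit 2 <-> i3 (e_3 = i1 i2, e_5 = i1 i3, ...). *)
Definition bitn (n b : nat) : bool := odd (n %/ 2 ^ b).

(* index of e_s e_t (up to sign): symmetric difference of bitmasks *)
Definition clxor (s t : nat) : nat :=
  (\sum_(b < 3) (bitn s b (+) bitn t b) * 2 ^ b)%N.

(* number of transpositions needed to reorder (gens of s)(gens of t) *)
Definition clswaps (s t : nat) : nat :=
  (\sum_(b < 3) \sum_(c < 3) [&& bitn t b, bitn s c & (b < c)%N])%N.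

(* number of squared generators equal to -1 (i2^2 = i3^2 = -1, i1^2 = 1) *)
Definition clnegsq (s t : nat) : nat :=
  ((bitn s 1 && bitn t 1) + (bitn s 2 && bitn t 2))%N.

(* e_s e_t = clsign s t * e_(clxor s t) *)
Definition clsign (R : pzRingType) (s t : nat) : R :=
  (-1) ^+ (clswaps s t + clnegsq s t).

(* Elements of Cl_{1,2} are represented by their coordinate vectors
   x = (x_0,...,x_7)^T, so the vectorization map x |-> ->x is the identity. *)
Definition clmul (R : pzRingType) (x y : 'cV[R]_8) : 'cV[R]_8 :=
  \col_(k < 8) \sum_(s < 8) \sum_(t < 8)
     (if clxor s t == k then clsign R s t * x s 0 * y t 0 else 0).

Definition clbasis (R : pzRingType) (j : 'I_8) : 'cV[R]_8 := delta_mx j 0.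

(* L(a), R(a): the matrices of x |-> a x and x |-> x a; column j is the
   coordinate vector of a e_j (resp. e_j a). *)
Definition Lmat (R : pzRingType) (a : 'cV[R]_8) : 'M[R]_8 :=
  \matrix_(i < 8, j < 8) clmul a (clbasis R j) i 0.
Definition Rmat (R : pzRingType) (a : 'cV[R]_8) : 'M[R]_8 :=
  \matrix_(i < 8, j < 8) clmul (clbasis R j) a i 0.

Definition clbar (R : pzRingType) (a : 'cV[R]_8) : 'cV[R]_8 :=
  \col_(i < 8) ((if (i == 0 :> nat) || (i == 7 :> nat) then 1 else -1) * a i 0).

Definition clprime (R : pzRingType) (a : 'cV[R]_8) : 'cV[R]_8 :=
  \col_(i < 8) ((if ((i : nat) \in [:: 0; 1; 3; 5]%N) then 1 else -1) * a i 0).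

Definition S8 (R : pzRingType) : 'M[R]_8 := diag_mx (\row_(i < 8) (-1) ^+ i).

From mathcomp Require Import all_boot all_order all_algebra.
From mathcomp Require Import reals.
Import Order.TTheory GRing.Theory Num.Theory.
Set Implicit Arguments. Unset Strict Implicit. Unset Printing Implicit Defensive.
Local Open Scope ring_scope.

(* Cl_{1,2} is a twisted group algebra of (Z/2)^3: e_s e_t = clsign s t e_(s xor t).
   Hence L(a) and R(a) are "twisted xor matrices" whose (i, j) entry is a sign
   times a_(i xor j).  Transposition swaps i and j but keeps i xor j, and the
   signs of a' compensate exactly for the change of the cocycle, which is a
   finite check.  Since the coordinates of a-bar are those of a' multiplied by
   (-1)^k, and k |-> (-1)^k is a character of (Z/2)^3, conjugating by S_8
   turns L(a') into L(a-bar), and likewise for R. *)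

Ltac case_ord8 i := case: i => [[|[|[|[|[|[|[|[|//]]]]]]]] ?].

Lemma clxorE (s t : nat) :
  clxor s t = ((bitn s 0 (+) bitn t 0) + (bitn s 1 (+) bitn t 1) * 2
               + (bitn s 2 (+) bitn t 2) * 4)%N.
Proof. by rewrite /clxor !big_ord_recr big_ord0 /= add0n muln1. Qed.

Lemma clswapsE (s t : nat) :
  clswaps s t = ((bitn t 0 && bitn s 1) + (bitn t 0 && bitn s 2)
                 + (bitn t 1 && bitn s 2))%N.
Proof. by rewrite /clswaps !big_ord_recr !big_ord0 /=; do 6!case: (bitn _ _). Qed.

Lemma clxor_lt8 (s t : nat) : (clxor s t < 8)%N.
Proof.
by rewrite clxorE; case: (_ (+) _); case: (_ (+) _); case: (_ (+) _).
Qed.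

Lemma odd_clxor (s t : nat) : odd (clxor s t) = odd s (+) odd t.
Proof. by rewrite clxorE /bitn !divn1 !oddD !oddM /= !andbF !addbF oddb. Qed.

Definition xor8 (i j : 'I_8) : 'I_8 := Ordinal (clxor_lt8 i j).

Lemma xor8E (i j : 'I_8) : xor8 i j = clxor i j :> nat.
Proof. by []. Qed.

Lemma xor8C (i j : 'I_8) : xor8 i j = xor8 j i.
Proof. by apply: val_inj; rewrite /= !clxorE !(addbC (bitn i _)). Qed.

Lemma xor8K (j : 'I_8) : involutive (xor8 j).
Proof. move=> i; apply: val_inj; rewrite /= !clxorE; by case_ord8 i; case_ord8 j. Qed.

Lemma xor8Kr (j : 'I_8) : involutive (xor8^~ j).
Proof. by move=> i; rewrite xor8C (xor8C i) xor8K. Qed.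

Lemma eq_clxor (s t k : 'I_8) : (clxor s t == k :> nat) = (t == xor8 s k).
Proof. exact: (can2_eq (xor8K s) (xor8K s)). Qed.

Lemma clmulE (R : pzRingType) (x y : 'cV[R]_8) (k : 'I_8) :
  clmul x y k 0 = \sum_(s < 8) clsign R s (xor8 s k) * x s 0 * y (xor8 s k) 0.
Proof.
rewrite mxE; apply: eq_bigr => s _.
rewrite (big_only1 (xor8 s k)) // ?eq_clxor ?eqxx // => t.
by rewrite eq_clxor => /negbTE->.
Qed.

Lemma clbasisE (R : pzRingType) (j t : 'I_8) : clbasis R j t 0 = (t == j)%:R.
Proof. by rewrite mxE andbT. Qed.

Lemma clmul_basisr (R : pzRingType) (x : 'cV[R]_8) (i j : 'I_8) :
  clmul x (clbasis R j) i 0 = clsign R (xor8 j i) j * x (xor8 j i) 0.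
Proof.
rewrite clmulE (big_only1 (xor8 j i)) // => [|s ne _].
  by rewrite xor8Kr clbasisE eqxx mulr1.
rewrite clbasisE; have [ej|_] := eqVneq (xor8 s i) j; last by rewrite mulr0.
by case/eqP: ne; rewrite -ej xor8Kr.
Qed.

Lemma clmul_basisl (R : pzRingType) (y : 'cV[R]_8) (i j : 'I_8) :
  clmul (clbasis R j) y i 0 = clsign R j (xor8 j i) * y (xor8 j i) 0.
Proof.
rewrite clmulE (big_only1 j) // => [|s /negbTE sj _]; rewrite clbasisE ?sj.
  by rewrite eqxx mulr1.
by rewrite mulr0 mul0r.
Qed.

Definition twist_mx (R : pzRingType) (c : 'I_8 -> 'I_8 -> R) (b : 'cV[R]_8) :
  'M[R]_8 := \matrix_(i, j) (c i j * b (xor8 i j) 0).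

Lemma Lmat_twist (R : pzRingType) (a : 'cV[R]_8) :
  Lmat a = twist_mx (fun i j => clsign R (xor8 i j) j) a.
Proof. by apply/matrixP => i j; rewrite [LHS]mxE clmul_basisr mxE (xor8C j). Qed.

Lemma Rmat_twist (R : pzRingType) (a : 'cV[R]_8) :
  Rmat a = twist_mx (fun i j => clsign R j (xor8 i j)) a.
Proof. by apply/matrixP => i j; rewrite [LHS]mxE clmul_basisl mxE (xor8C j). Qed.

Lemma twist_mx_diag_tr (R : comPzRingType) (c c' : 'I_8 -> 'I_8 -> R)
    (w : 'rV[R]_8) (b : 'cV[R]_8) :
    (forall i j, w 0 (xor8 i j) * c i j = c' j i) ->
  twist_mx c (diag_mx w *m b) = (twist_mx c' b)^T.
Proof.
move=> cc'; apply/matrixP => i j.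
by rewrite mul_diag_mx !mxE -cc' (xor8C j) mulrCA mulrA.
Qed.

Lemma twist_mx_diag_conj (R : comPzRingType) (c : 'I_8 -> 'I_8 -> R)
    (d : 'rV[R]_8) (b : 'cV[R]_8) :
    (forall i j, d 0 (xor8 i j) = d 0 i * d 0 j) ->
  twist_mx c (diag_mx d *m b) = diag_mx d *m twist_mx c b *m diag_mx d.
Proof.
move=> dM; apply/matrixP => i j.
by rewrite mul_mx_diag !mul_diag_mx !mxE dM mulrCA [RHS]mulrAC.
Qed.

Lemma signr_xor8 (R : pzRingType) (i j : 'I_8) :
  (-1) ^+ xor8 i j = (-1) ^+ i * (-1) ^+ j :> R.
Proof. by rewrite -signr_odd xor8E odd_clxor signr_addb !signr_odd. Qed.

Lemma if_sign (R : pzRingType) (b : bool) : (if b then 1 else -1 : R) = (-1) ^+ ~~ b.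
Proof. by case: b. Qed.

Definition clprime_signs (R : pzRingType) : 'rV[R]_8 :=
  \row_(k < 8) (if (k : nat) \in [:: 0; 1; 3; 5]%N then 1 else -1).

Lemma clprimeE (R : pzRingType) (a : 'cV[R]_8) :
  clprime a = diag_mx (clprime_signs R) *m a.
Proof. by apply/matrixP => i j; rewrite mul_diag_mx !mxE ord1. Qed.

Lemma clbarE (R : pzRingType) (a : 'cV[R]_8) : clbar a = S8 R *m clprime a.
Proof.
apply/matrixP => i j; rewrite /S8 mul_diag_mx !mxE mulrA !if_sign.
rewrite -[(-1) ^+ i]signr_odd -signr_addb; congr (_ ^+ _ * _).
by case_ord8 i.
Qed.

Lemma clsign_clprimeL (R : pzRingType) (i j : 'I_8) :
  clprime_signs R 0 (xor8 i j) * clsign R (xor8 i j) j = clsign R (xor8 j i) i.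
Proof.
rewrite mxE if_sign /clsign -exprD -[LHS]signr_odd -[RHS]signr_odd !xor8E.
rewrite !clxorE !clswapsE /clnegsq; congr (_ ^+ _).
by case_ord8 i; case_ord8 j.
Qed.

Lemma clsign_clprimeR (R : pzRingType) (i j : 'I_8) :
  clprime_signs R 0 (xor8 i j) * clsign R j (xor8 i j) = clsign R i (xor8 j i).
Proof.
rewrite mxE if_sign /clsign -exprD -[LHS]signr_odd -[RHS]signr_odd !xor8E.
rewrite !clxorE !clswapsE /clnegsq; congr (_ ^+ _).
by case_ord8 i; case_ord8 j.
Qed.

Lemma Lmat_clprime (R : comPzRingType) (a : 'cV[R]_8) :
  Lmat (clprime a) = (Lmat a)^T.
Proof.
by rewrite clprimeE !Lmat_twist; apply: twist_mx_diag_tr; apply: clsign_clprimeL.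
Qed.

Lemma Rmat_clprime (R : comPzRingType) (a : 'cV[R]_8) :
  Rmat (clprime a) = (Rmat a)^T.
Proof.
by rewrite clprimeE !Rmat_twist; apply: twist_mx_diag_tr; apply: clsign_clprimeR.
Qed.

Lemma Lmat_S8 (R : comPzRingType) (b : 'cV[R]_8) :
  Lmat (S8 R *m b) = S8 R *m Lmat b *m S8 R.
Proof.
by rewrite /S8 !Lmat_twist; apply: twist_mx_diag_conj => i j; rewrite !mxE signr_xor8.
Qed.

Lemma Rmat_S8 (R : comPzRingType) (b : 'cV[R]_8) :
  Rmat (S8 R *m b) = S8 R *m Rmat b *m S8 R.
Proof.
by rewrite /S8 !Rmat_twist; apply: twist_mx_diag_conj => i j; rewrite !mxE signr_xor8.
Qed.

Theorem proposition2p2 (R : realType) (a : 'cV[R]_8) :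
  [/\ Lmat (clprime a) = (Lmat a)^T,
      Rmat (clprime a) = (Rmat a)^T,
      Lmat (clbar a) = S8 R *m (Lmat a)^T *m S8 R
    & Rmat (clbar a) = S8 R *m (Rmat a)^T *m S8 R].
Proof.
by split; rewrite ?clbarE ?Lmat_S8 ?Rmat_S8 ?Lmat_clprime ?Rmat_clprime.
Qed.
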